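(* Let $m,d_o,N_D\ge1$ be integers, $d=md_o$, and let $(x^j,y^j)_{j=1}^{N_D}$ be data with $x^j\in\mathbb R^{d_o}$ and $y^j\in\{1,\dots,m\}$. For $q=(q^1,\dots,q^m)\in\mathbb R^d$ with $q^i\in\mathbb R^{d_o}$ let \[p(y^j\mid q)=\frac{\exp(\langle x^j,q^{y^j}\rangle)}{\sum_{k=1}^m\exp(\langle x^j,q^k\rangle)},\qquad U(q)=\frac{\|q\|^2}{2\sigma_0^2}+\mathrm{const}-\sum_{j=1}^{N_D}\log p(y^j\mid q),\] with $\sigma_0>0$. Then \[\sup_{q\in\mathbb R^d}\|\nabla^2U(q)\|\le\sigma_0^{-2}+\Big\|\sum_{l=1}^{N_D}x^l(x^l)^T\Big\|,\qquad \sup_{q\in\mathbb R^d}\|\nabla^3U(q)\|_{\{1,2\}\{3\}}\le6\,\Big\|\sum_{l=1}^{N_D}x^l(x^l)^T\Big(\sum_{k=1}^{N_D}\langle x^l,x^k\rangle^2\Big)\Big\|^{1/2}.\]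
   Context: $\|\cdot\|$ of a matrix is the spectral (operator) norm. For $A\in\mathbb R^{d\times d\times d}$, $\|A\|_{\{1,2\}\{3\}}=\sup\{\sum_{i,j,k}A_{ijk}x_{ij}y_k:\sum_{i,j}x_{ij}^2\le1,\sum_ky_k^2\le1\}$, and $(\nabla^3U)_{ijk}=\partial_i\partial_j\partial_kU$. The constant in $U$ (the log-normalization of the Gaussian prior) does not depend on $q$. *)

From HB Require Import structures.
From mathcomp Require Import all_boot all_order all_algebra.
From mathcomp Require Import all_classical all_reals all_analysis.
Set Implicit Arguments. Unset Strict Implicit. Unset Printing Implicit Defensive.
Import Order.TTheory GRing.Theory Num.Theory.
Import numFieldNormedType.Exports.
Local Open Scope classical_set_scope.
Local Open Scope ring_scope.

(* Parameter vectors q in R^d, d = m * d_o, are represented as m x d_o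
   matrices: row i of q is the block q^i in R^{d_o}.  Coordinates of R^d are
   indexed by pairs (i, a) : 'I_m * 'I_d_o. *)

Definition sqnorm (R : realType) (I : finType) (v : I -> R) : R :=
  \sum_(i : I) v i ^+ 2.

Definition opnorm (R : realType) (I : finType) (A : I -> I -> R) : R :=
  sup [set Num.sqrt (sqnorm (fun i => \sum_(j : I) A i j * v j))
       | v in [set v : I -> R | sqnorm v <= 1]].

Definition tnorm123 (R : realType) (I : finType) (A : I -> I -> I -> R) : R :=
  sup [set \sum_(i : I) \sum_(j : I) \sum_(k : I) A i j k * xy.1 (i, j) * xy.2 k
       | xy in [set xy : ((I * I)%type -> R) * (I -> R) |
                 sqnorm xy.1 <= 1 /\ sqnorm xy.2 <= 1]].

Definition ip (R : realType) (m d0 : nat) (xj : 'I_d0 -> R) (q : 'M[R]_(m, d0))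
  (k : 'I_m) : R := \sum_(a < d0) xj a * q k a.

Definition lik (R : realType) (m d0 : nat) (xj : 'I_d0 -> R) (yj : 'I_m)
  (q : 'M[R]_(m, d0)) : R :=
  expR (ip xj q yj) / \sum_(k < m) expR (ip xj q k).

Definition Upot (R : realType) (m d0 ND : nat) (x : 'I_ND -> 'I_d0 -> R)
  (y : 'I_ND -> 'I_m) (sigma0 c : R) (q : 'M[R]_(m, d0)) : R :=
  (\sum_(i < m) \sum_(a < d0) q i a ^+ 2) / (2 * sigma0 ^+ 2) + c
  - \sum_(j < ND) ln (lik (x j) (y j) q).

Definition ebasis (R : realType) (m d0 : nat) (ia : ('I_m * 'I_d0)%type)
  : 'M[R]_(m, d0) := delta_mx ia.1 ia.2.

Definition hess (R : realType) (m d0 : nat) (f : 'M[R]_(m, d0) -> R)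
  (q : 'M[R]_(m, d0)) (ia jb : ('I_m * 'I_d0)%type) : R :=
  derive (fun p => derive f p (ebasis R jb)) q (ebasis R ia).

Definition third (R : realType) (m d0 : nat) (f : 'M[R]_(m, d0) -> R)
  (q : 'M[R]_(m, d0)) (ia jb kc : ('I_m * 'I_d0)%type) : R :=
  derive (fun p => derive (fun r => derive f r (ebasis R kc)) p (ebasis R jb))
    q (ebasis R ia).

From HB Require Import structures.
From mathcomp Require Import all_boot all_order all_algebra.
From mathcomp Require Import all_classical all_reals all_analysis.
From mathcomp Require Import ring lra.
Import Order.TTheory GRing.Theory Num.Theory.
Import numFieldNormedType.Exports.
Local Open Scope ring_scope.

(* The potential is the Gaussian term plus, for every datum l, the log-sum-exp of
   the logits z_k = <x^l, q^k> minus a linear term.  Writing p_l for the softmax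
   vector of datum l, the chain rule gives in the coordinates (i, a) of q
     d_(i,a) d_(j,b) U = [(i,a) = (j,b)] / sigma0^2
                         + sum_l x^l_a x^l_b p_l,j ([j = i] - p_l,i),
     d_(i,a) d_(j,b) d_(k,c) U = sum_l x^l_a x^l_b x^l_c kappa_l(i,j,k),
   with kappa_l the third derivative of log-sum-exp.
   Hessian: the data part is X^T C X, where C centres each row by a probability
   vector; centring does not increase norms, so |X^T C X| <= |X|^2 = |X^T X|.
   Third derivative: contracting kappa_l with arrays A and B costs at most
   6 |A| |B|, since each of its six monomials is a diagonal or an outer product of
   vectors of norm <= 1.  Cauchy-Schwarz with the weights
   w_l = sum_k <x^l, x^k>^2 then separates the two sides: the A-side is bounded
   by a Schur test for the nonnegative Gram matrix <x^l, x^k>^2 of the tensors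
   x^l (x) x^l, and the B-side by the matrix sum_l w_l x^l x^l^T. *)

(** * Euclidean and operator norms *)

Section SquaredNorm.
Context {R : realType}.

Lemma sum_pair {I J : finType} (F : I * J -> R) : \sum_p F p = \sum_i \sum_j F (i, j).
Proof. by rewrite pair_bigA; apply: eq_bigr => -[]. Qed.

Lemma sqnorm_pair {I J : finType} (v : I * J -> R) : sqnorm v = \sum_i \sum_j v (i, j) ^+ 2.
Proof. exact: sum_pair. Qed.

Lemma sum_delta {I : finType} (f : I -> R) i : \sum_k (k == i)%:R * f k = f i.
Proof.
by rewrite (bigD1 i) //= eqxx mul1r big1 ?addr0 // => k /negbTE ->; rewrite mul0r.
Qed.

Lemma sqnorm_ge0 {I : finType} (v : I -> R) : 0 <= sqnorm v.
Proof. by apply: sumr_ge0 => i _; apply: sqr_ge0. Qed.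

Lemma sqnorm_eq0 {I : finType} {v : I -> R} : sqnorm v = 0 -> forall i, v i = 0.
Proof.
move=> v0 i; have /eqP := psumr_eq0P (fun i _ => sqr_ge0 (v i)) v0 (isT : xpredT i).
by rewrite sqrf_eq0 => /eqP.
Qed.

Lemma sqnormZ {I : finType} (k : R) (v : I -> R) : sqnorm (fun i => k * v i) = k ^+ 2 * sqnorm v.
Proof. by rewrite /sqnorm mulr_sumr; apply: eq_bigr => i _; rewrite exprMn. Qed.

Lemma sqnormN {I : finType} (v : I -> R) : sqnorm (fun i => - v i) = sqnorm v.
Proof. by apply: eq_bigr => i _; rewrite sqrrN. Qed.

Lemma sqnorm_outer {I J : finType} (u : I -> R) (v : J -> R) :
  sqnorm (fun p : I * J => u p.1 * v p.2) = sqnorm u * sqnorm v.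
Proof.
rewrite sqnorm_pair mulr_suml; apply: eq_bigr => i _.
by rewrite mulr_sumr; apply: eq_bigr => j _; rewrite exprMn.
Qed.

Lemma sqnorm_diag {I : finType} (u : I -> R) :
  sqnorm (fun p : I * I => (p.1 == p.2)%:R * u p.1) = sqnorm u.
Proof.
rewrite sqnorm_pair; apply: eq_bigr => i _.
rewrite (bigD1 i) //= eqxx mul1r big1 ?addr0 // => j /negbTE.
by rewrite eq_sym => ->; rewrite mul0r expr0n.
Qed.

Lemma CauchySchwarz_sum {I : finType} (a b : I -> R) :
  (\sum_i a i * b i) ^+ 2 <= sqnorm a * sqnorm b.
Proof.
set A := sqnorm a; set B := sqnorm b; set C := \sum_i a i * b i.
have [B0|B_neq0] := eqVneq B 0.
  have -> : C = 0 by rewrite /C big1 // => i _; rewrite (sqnorm_eq0 B0) mulr0.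
  by rewrite B0 expr0n mulr0.
have B_gt0 : 0 < B by rewrite lt0r B_neq0 sqnorm_ge0.
(* [B (A B - C^2)] is the squared norm of [B a - C b] *)
have : 0 <= B * (A * B - C ^+ 2).
  suff <- : \sum_i (a i * B - b i * C) ^+ 2 = B * (A * B - C ^+ 2).
    by apply: sumr_ge0 => i _; apply: sqr_ge0.
  transitivity (\sum_i (B ^+ 2 * a i ^+ 2 - (2 * B * C) * (a i * b i) + C ^+ 2 * b i ^+ 2)).
    by apply: eq_bigr => i _; ring.
  by rewrite big_split sumrB /= -!mulr_sumr -[\sum_i a i ^+ 2]/A -[\sum_i b i ^+ 2]/B -/C; ring.
by rewrite pmulr_rge0 // subr_ge0.
Qed.

Lemma CauchySchwarz_sum_norm {I : finType} (a b : I -> R) :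
  `|\sum_i a i * b i| <= Num.sqrt (sqnorm a) * Num.sqrt (sqnorm b).
Proof.
rewrite -sqrtrM ?sqnorm_ge0 // -sqrtr_sqr ler_sqrt; first exact: CauchySchwarz_sum.
by rewrite mulr_ge0 ?sqnorm_ge0.
Qed.

Lemma CauchySchwarz_sum_sqrt {I : finType} (a b : I -> R) :
  \sum_i a i * b i <= Num.sqrt (sqnorm a) * Num.sqrt (sqnorm b).
Proof. exact: le_trans (ler_norm _) (CauchySchwarz_sum_norm a b). Qed.

Lemma sqrtr_le (a b : R) : 0 <= b -> a <= b ^+ 2 -> Num.sqrt a <= b.
Proof. by move=> b_ge0 ab; rewrite -(ger0_norm b_ge0) -sqrtr_sqr ler_sqrt ?sqr_ge0. Qed.

Lemma le_sqrt_mul_sqrt (a b : R) : 0 <= b ->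
  a <= Num.sqrt b * Num.sqrt a -> a <= b.
Proof.
move=> b_ge0 a_le; have [a_le0|a_gt0] := lerP a 0; first exact: le_trans a_le0 b_ge0.
move: a_le; rewrite -{1}[a]sqr_sqrtr; last exact: ltW.
by rewrite expr2 ler_pM2r ?sqrtr_gt0 // ler_sqrt.
Qed.

Lemma Minkowski {I : finType} (a b : I -> R) :
  Num.sqrt (sqnorm (fun i => a i + b i)) <= Num.sqrt (sqnorm a) + Num.sqrt (sqnorm b).
Proof.
apply: sqrtr_le; first by rewrite addr_ge0 ?sqrtr_ge0.
have -> : sqnorm (fun i => a i + b i) = sqnorm a + 2 * \sum_i a i * b i + sqnorm b.
  by rewrite /sqnorm mulr_sumr -!big_split; apply: eq_bigr => i _ /=; ring.
rewrite sqrrD !sqr_sqrtr ?sqnorm_ge0 //.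
by have := CauchySchwarz_sum_sqrt a b; lra.
Qed.

Lemma Minkowski_le {I : finType} (a b : I -> R) ka kb :
  Num.sqrt (sqnorm a) <= ka -> Num.sqrt (sqnorm b) <= kb ->
  Num.sqrt (sqnorm (fun i => a i + b i)) <= ka + kb.
Proof. by move=> a_le b_le; apply: le_trans (Minkowski a b) (lerD a_le b_le). Qed.

Lemma CauchySchwarz_weighted {I : finType} (a b w : I -> R) :
  (forall i, 0 <= a i) -> (forall i, 0 <= b i) -> (forall i, 0 <= w i) ->
  (forall i, w i = 0 -> a i = 0) ->
  \sum_i Num.sqrt (a i) * Num.sqrt (b i) <=
  Num.sqrt (\sum_i a i / w i) * Num.sqrt (\sum_i w i * b i).
Proof.
move=> a_ge0 b_ge0 w_ge0 w0_a0.
have split_w i : Num.sqrt (a i) * Num.sqrt (b i) =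
    Num.sqrt (a i / w i) * Num.sqrt (w i * b i).
  have [wi0|wi_neq0] := eqVneq (w i) 0.
    by rewrite wi0 (w0_a0 _ wi0) !(sqrtr0, mul0r).
  by rewrite -!sqrtrM ?divr_ge0 //; congr Num.sqrt; field.
under eq_bigr do rewrite split_w.
apply: le_trans (CauchySchwarz_sum_sqrt _ _) _.
rewrite /sqnorm; under eq_bigr do rewrite sqr_sqrtr ?divr_ge0 //.
by under [X in _ * Num.sqrt X]eq_bigr do rewrite sqr_sqrtr ?mulr_ge0 //.
Qed.

End SquaredNorm.

Section OperatorNorm.
Context {R : realType} {I : finType}.
Implicit Types (A : I -> I -> R) (v w : I -> R).

Definition matvec A v : I -> R := fun i => \sum_j A i j * v j.

Lemma sqnorm0 : sqnorm (fun _ : I => 0 : R) = 0.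
Proof. by rewrite /sqnorm big1 // => i _; rewrite expr0n. Qed.

Lemma opnorm_ge A w : sqnorm w <= 1 -> Num.sqrt (sqnorm (matvec A w)) <= opnorm A.
Proof.
move=> w_le1; apply: sup_upper_bound; last by exists w.
split; first by exists (Num.sqrt (sqnorm (matvec A 0))), 0 => //=; rewrite sqnorm0.
exists (Num.sqrt (\sum_i sqnorm (A i))) => _ [v /= v_le1 <-].
rewrite ler_sqrt; last by apply: sumr_ge0 => i _; apply: sqnorm_ge0.
rewrite /sqnorm /matvec; apply: ler_sum => i _.
by apply: le_trans (CauchySchwarz_sum _ _) _; rewrite ler_piMr ?sqnorm_ge0.
Qed.

Lemma opnorm_ge0 A : 0 <= opnorm A.
Proof. by apply: le_trans (sqrtr_ge0 _) (opnorm_ge A (fun _ => 0) _); rewrite sqnorm0. Qed.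

Lemma opnorm_le A b :
  (forall v, sqnorm v <= 1 -> Num.sqrt (sqnorm (matvec A v)) <= b) -> opnorm A <= b.
Proof.
move=> ub; apply: ge_sup => [|_ [v /= v_le1 <-]]; last exact: ub.
by exists (Num.sqrt (sqnorm (matvec A 0))), 0 => //=; rewrite sqnorm0.
Qed.

Lemma sqnorm_matvec_le A w : sqnorm (matvec A w) <= opnorm A ^+ 2 * sqnorm w.
Proof.
have [w0|w_neq0] := eqVneq (sqnorm w) 0.
  have -> : matvec A w = fun _ => 0.
    by apply: funext => i; rewrite /matvec big1 // => j _; rewrite (sqnorm_eq0 w0) mulr0.
  by rewrite sqnorm0 w0 mulr0.
set n := Num.sqrt (sqnorm w).
have n2 : n ^+ 2 = sqnorm w by rewrite sqr_sqrtr ?sqnorm_ge0.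
have unit_w : sqnorm (fun j => n^-1 * w j) <= 1 by rewrite sqnormZ exprVn n2 mulVf.
have matvec_unit : matvec A (fun j => n^-1 * w j) = (fun i => n^-1 * matvec A w i).
  by apply: funext => i; rewrite /matvec mulr_sumr; apply: eq_bigr => j _; ring.
have := opnorm_ge A _ unit_w; rewrite matvec_unit sqnormZ exprVn n2.
rewrite -ler_sqr ?nnegrE ?sqrtr_ge0 ?opnorm_ge0 // sqr_sqrtr => [bound|]; last first.
  by rewrite mulr_ge0 ?invr_ge0 ?sqnorm_ge0.
by have := ler_wpM2r (sqnorm_ge0 w) bound; rewrite mulrAC mulVf // mul1r.
Qed.

Lemma quadratic_form_le_opnorm A u : \sum_i u i * matvec A u i <= opnorm A * sqnorm u.
Proof.
have Au_le : Num.sqrt (sqnorm (matvec A u)) <= opnorm A * Num.sqrt (sqnorm u).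
  apply: sqrtr_le; first by rewrite mulr_ge0 ?opnorm_ge0 ?sqrtr_ge0.
  by rewrite exprMn sqr_sqrtr ?sqnorm_ge0 ?sqnorm_matvec_le.
apply: le_trans (CauchySchwarz_sum_sqrt _ _) _.
apply: le_trans (ler_wpM2l (sqrtr_ge0 _) Au_le) _.
by rewrite mulrCA -expr2 sqr_sqrtr ?sqnorm_ge0.
Qed.

End OperatorNorm.

Lemma tnorm123_le (R : realType) (I : finType) (T : I -> I -> I -> R) b :
  (forall (X : I * I -> R) (Y : I -> R), sqnorm X <= 1 -> sqnorm Y <= 1 ->
     \sum_i \sum_j \sum_k T i j k * X (i, j) * Y k <= b) ->
  tnorm123 T <= b.
Proof.
move=> ub; apply: ge_sup => [|_ [[X Y] /= [X_le1 Y_le1] <-]]; last exact: ub.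
by exists (\sum_i \sum_j \sum_k T i j k * 0 * 0), (0, 0) => //=; rewrite !sqnorm0.
Qed.

(** * Probability vectors and log-sum-exp *)

Section ProbabilityVector.
Context {R : realType} {I : finType} (p : I -> R).
Hypotheses (p_ge0 : forall i, 0 <= p i) (p_sum1 : \sum_i p i = 1).

Lemma prob_le1 i : p i <= 1.
Proof.
rewrite -p_sum1 (bigD1 i) //= lerDl.
by apply: sumr_ge0 => j _.
Qed.

Lemma sqr_prob_le i : p i ^+ 2 <= p i.
Proof. by rewrite expr2 ler_piMr ?prob_le1. Qed.

Lemma sqnorm_prob_le1 : sqnorm p <= 1.
Proof. by rewrite -p_sum1; apply: ler_sum => i _; apply: sqr_prob_le. Qed.

Lemma sqnorm_mulprob_le (a : I -> R) : sqnorm (fun i => p i * a i) <= sqnorm a.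
Proof.
apply: ler_sum => i _; rewrite exprMn ler_piMl ?sqr_ge0 //.
exact: le_trans (sqr_prob_le i) (prob_le1 i).
Qed.

Lemma sqr_mean_le (a : I -> R) : (\sum_i p i * a i) ^+ 2 <= sqnorm a.
Proof.
apply: le_trans (CauchySchwarz_sum _ _) _.
by rewrite ler_piMl ?sqnorm_ge0 ?sqnorm_prob_le1.
Qed.

Lemma sqnorm_centered_le (a : I -> R) :
  sqnorm (fun i => p i * (a i - \sum_k p k * a k)) <= sqnorm a.
Proof.
set mu := \sum_k p k * a k.
have variance : \sum_i p i * (a i - mu) ^+ 2 = \sum_i p i * a i ^+ 2 - mu ^+ 2.
  transitivity (\sum_i (p i * a i ^+ 2 - (2 * mu) * (p i * a i) + mu ^+ 2 * p i)).
    by apply: eq_bigr => i _; ring.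
  by rewrite big_split sumrB /= -!mulr_sumr p_sum1 -/mu; ring.
apply: (@le_trans _ _ (\sum_i p i * (a i - mu) ^+ 2)).
  by apply: ler_sum => i _; rewrite exprMn ler_wpM2r ?sqr_ge0 ?sqr_prob_le.
have : \sum_i p i * a i ^+ 2 <= sqnorm a.
  by apply: ler_sum => i _; rewrite ler_piMl ?sqr_ge0 ?prob_le1.
by rewrite variance; have := sqr_ge0 mu; lra.
Qed.

(* The (i, j, k) entry of the third derivative of [z |-> ln (\sum_k expR (z k))]
   at a point [z] whose softmax is [p]. *)
Definition lse3 i j k :=
  p k * ((k == i)%:R - p i) * ((k == j)%:R - p j) - p k * p j * ((j == i)%:R - p i).

Lemma lse3_contractE (B : I -> R) i j :
  let mu := \sum_k p k * B k in
  \sum_k lse3 i j k * B k =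
    (i == j)%:R * (p i * B i) + (- (p i * B i)) * p j + p i * (- (p j * B j))
    + mu * p i * p j + mu * p i * p j + (i == j)%:R * (- (mu * p i)).
Proof.
move=> mu.
have -> : (i == j)%:R * (- (mu * p i)) = - ((j == i)%:R * (p j * mu)).
  by case: eqVneq => [->|_]; rewrite ?eqxx ?mul0r ?oppr0 //; ring.
transitivity (\sum_k ((k == i)%:R * ((k == j)%:R * (p k * B k))
    - p j * ((k == i)%:R * (p k * B k)) - p i * ((k == j)%:R * (p k * B k))
    + (2 * p i * p j - p j * (j == i)%:R) * (p k * B k))).
  by apply: eq_bigr => k _; rewrite /lse3; ring.
by rewrite !big_split /= !sumrN -!mulr_sumr !sum_delta -/mu; ring.
Qed.

Lemma sqnorm_lse3_contract_le (B : I -> R) :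
  Num.sqrt (sqnorm (fun ij : I * I => \sum_k lse3 ij.1 ij.2 k * B k))
  <= 6 * Num.sqrt (sqnorm B).
Proof.
set b := Num.sqrt (sqnorm B); set mu := \sum_k p k * B k.
have le_b (c : I * I -> R) : sqnorm c <= sqnorm B -> Num.sqrt (sqnorm c) <= b.
  by move=> cB; rewrite ler_sqrt ?sqnorm_ge0.
have pB_le : sqnorm (fun i => p i * B i) <= sqnorm B by apply: sqnorm_mulprob_le.
have muB_le : sqnorm (fun i => mu * p i) <= sqnorm B.
  rewrite sqnormZ; apply: le_trans (sqr_mean_le B).
  by rewrite ler_piMr ?sqr_ge0 ?sqnorm_prob_le1.
have outer_le (u v : I -> R) : sqnorm u <= sqnorm B -> sqnorm v <= 1 ->
    sqnorm (fun ij : I * I => u ij.1 * v ij.2) <= sqnorm B.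
  by move=> uB v1; rewrite sqnorm_outer; apply: le_trans uB; rewrite ler_piMr ?sqnorm_ge0.
under eq_fun do rewrite lse3_contractE -/mu.
have -> : 6 * b = b + b + b + b + b + b by ring.
(* the six monomials of [lse3] give diagonal or outer-product arrays *)
apply: Minkowski_le; last first.
  by apply: le_b; rewrite (sqnorm_diag (fun i => - (mu * p i))) sqnormN.
have muc_le := outer_le (fun i => mu * p i) p muB_le sqnorm_prob_le1.
apply: Minkowski_le; last exact: le_b muc_le.
apply: Minkowski_le; last exact: le_b muc_le.
apply: Minkowski_le; last first.
  apply: le_b; rewrite (sqnorm_outer p (fun i => - (p i * B i))) mulrC sqnormN.
  by apply: le_trans pB_le; rewrite ler_piMr ?sqnorm_ge0 ?sqnorm_prob_le1.
apply: Minkowski_le; last first.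
  by apply: le_b; apply: (outer_le (fun i => - (p i * B i)) p); rewrite ?sqnormN ?sqnorm_prob_le1.
by apply: le_b; rewrite (sqnorm_diag (fun i => p i * B i)).
Qed.

Lemma lse3_contract_le (A : I * I -> R) (B : I -> R) :
  `|\sum_ij A ij * \sum_k lse3 ij.1 ij.2 k * B k|
  <= 6 * Num.sqrt (sqnorm A) * Num.sqrt (sqnorm B).
Proof.
apply: le_trans (CauchySchwarz_sum_norm _ _) _.
by rewrite -mulrA mulrCA ler_wpM2l ?sqrtr_ge0 ?sqnorm_lse3_contract_le.
Qed.

End ProbabilityVector.

(** * Bounds on the derivative arrays *)

Section SchurTest.
Context {R : realType} {L : finType}.

Lemma Schur_test {G : L -> L -> R} (c : L -> R) :
  (forall l k, 0 <= G l k) -> (forall l k, G l k = G k l) ->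
  \sum_l \sum_k c l * c k * G l k <= \sum_l c l ^+ 2 * \sum_k G l k.
Proof.
move=> G_ge0 G_sym.
apply: (@le_trans _ _ (\sum_l \sum_k (c l ^+ 2 * G l k + c k ^+ 2 * G l k) / 2)).
  apply: ler_sum => l _; apply: ler_sum => k _; rewrite ler_pdivlMr //.
  rewrite -subr_ge0.
  have -> : c l ^+ 2 * G l k + c k ^+ 2 * G l k - c l * c k * G l k * 2
      = (c l - c k) ^+ 2 * G l k by ring.
  by rewrite mulr_ge0 ?sqr_ge0.
under eq_bigr do rewrite -mulr_suml big_split /=.
rewrite -mulr_suml big_split /= [X in _ + X]exchange_big /=.
have -> : \sum_k \sum_l c k ^+ 2 * G l k = \sum_l c l ^+ 2 * \sum_k G l k.
  by apply: eq_bigr => l _; rewrite mulr_sumr; apply: eq_bigr => k _; rewrite G_sym.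
under eq_bigr do rewrite -mulr_sumr.
lra.
Qed.

Lemma frame_bound {J : finType} (u : L -> J -> R) (z : J -> R) :
  (forall l k, 0 <= \sum_j u l j * u k j) ->
  \sum_l (\sum_j u l j * z j) ^+ 2 / \sum_k \sum_j u l j * u k j <= sqnorm z.
Proof.
move=> G_ge0.
set G := fun l k => \sum_j u l j * u k j; set w := fun l => \sum_k G l k.
set t := fun l => \sum_j u l j * z j; set c := fun l => t l / w l.
set Q := \sum_l t l ^+ 2 / w l.
have w_ge0 l : 0 <= w l by apply: sumr_ge0 => k _; apply: G_ge0.
have Q_ge0 : 0 <= Q by apply: sumr_ge0 => l _; rewrite divr_ge0 ?sqr_ge0.
(* [Q = <g, z>] and [|g|^2 <= Q] for [g := \sum_l c l * u l] *)
set g := fun j => \sum_l c l * u l j.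
have Q_gz : Q = \sum_j g j * z j.
  rewrite /g; under eq_bigr do rewrite mulr_suml.
  rewrite exchange_big /=; apply: eq_bigr => l _.
  under eq_bigr do rewrite -mulrA.
  by rewrite -mulr_sumr -/(t l) /c expr2 mulrAC.
have g_le : sqnorm g <= Q.
  have -> : sqnorm g = \sum_l \sum_k c l * c k * G l k.
    rewrite /sqnorm /g; under eq_bigr do rewrite expr2 mulr_suml.
    rewrite exchange_big /=; apply: eq_bigr => l _.
    under eq_bigr do rewrite mulr_sumr.
    rewrite exchange_big /= /G; apply: eq_bigr => k _.
    by rewrite mulr_sumr; apply: eq_bigr => j _; ring.
  have G_sym l k : G l k = G k l by apply: eq_bigr => j _; rewrite mulrC.
  apply: le_trans (Schur_test c G_ge0 G_sym) _.
  (* the terms with [w l = 0] vanish on both sides because [_ / 0 = 0] *)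
  apply: ler_sum => l _; rewrite /c -/(w l).
  have [->|w_neq0] := eqVneq (w l) 0; first by rewrite invr0 !mulr0.
  by rewrite (_ : c l ^+ 2 * w l = t l ^+ 2 / w l) // /c; field.
apply: le_sqrt_mul_sqrt; first exact: sqnorm_ge0.
rewrite {1}Q_gz mulrC; apply: le_trans (CauchySchwarz_sum_sqrt _ _) _.
by rewrite ler_wpM2r ?sqrtr_ge0 // ler_sqrt.
Qed.

End SchurTest.

Section DataGram.
Context {R : realType} {d0 ND : nat} (x : 'I_ND -> 'I_d0 -> R).

Definition gram (w : 'I_ND -> R) (a b : 'I_d0) : R := \sum_l x l a * x l b * w l.

Lemma gram1 : gram (fun=> 1) = (fun a b => \sum_l x l a * x l b).
Proof. by apply: funext => a; apply: funext => b; apply: eq_bigr => l _; rewrite mulr1. Qed.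

Lemma weighted_sqr_inner_le (w : 'I_ND -> R) (u : 'I_d0 -> R) :
  \sum_l w l * (\sum_a x l a * u a) ^+ 2 <= opnorm (gram w) * sqnorm u.
Proof.
suff -> : \sum_l w l * (\sum_a x l a * u a) ^+ 2 = \sum_a u a * matvec (gram w) u a.
  exact: quadratic_form_le_opnorm.
transitivity (\sum_l \sum_a \sum_b u a * (x l a * x l b * w l * u b)).
  apply: eq_bigr => l _; rewrite expr2 mulr_suml mulr_sumr; apply: eq_bigr => a _.
  by rewrite !mulr_sumr; apply: eq_bigr => b _; ring.
rewrite exchange_big; apply: eq_bigr => a _.
rewrite exchange_big /matvec mulr_sumr; apply: eq_bigr => b _.
by rewrite mulr_suml mulr_sumr.
Qed.

Lemma sqr_inner_le (u : 'I_d0 -> R) :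
  \sum_l (\sum_a x l a * u a) ^+ 2 <= opnorm (gram (fun=> 1)) * sqnorm u.
Proof. by have := weighted_sqr_inner_le (fun=> 1) u; under eq_bigr do rewrite mul1r. Qed.

Lemma sqnorm_xT_le (g : 'I_ND -> R) :
  sqnorm (fun a => \sum_l x l a * g l) <= opnorm (gram (fun=> 1)) * sqnorm g.
Proof.
set u := fun a => \sum_l x l a * g l; set N := opnorm (gram (fun=> 1)).
apply: le_sqrt_mul_sqrt; first by rewrite mulr_ge0 ?opnorm_ge0 ?sqnorm_ge0.
have u_eq : sqnorm u = \sum_l g l * (\sum_a x l a * u a).
  rewrite /sqnorm; under eq_bigr do rewrite expr2 {1}/u mulr_suml.
  rewrite exchange_big; apply: eq_bigr => l _.
  by rewrite mulr_sumr; apply: eq_bigr => a _; ring.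
rewrite {1}u_eq; apply: le_trans (CauchySchwarz_sum_sqrt _ _) _.
rewrite sqrtrM ?opnorm_ge0 // -mulrA mulrCA ler_wpM2l ?sqrtr_ge0 //.
rewrite -sqrtrM ?opnorm_ge0 // ler_sqrt ?mulr_ge0 ?opnorm_ge0 ?sqnorm_ge0 //.
exact: sqr_inner_le.
Qed.

Definition inner_sqr_sum (l : 'I_ND) : R := \sum_k (\sum_e x l e * x k e) ^+ 2.

Lemma inner_sqr_sum_ge0 l : 0 <= inner_sqr_sum l.
Proof. by apply: sumr_ge0 => k _; apply: sqr_ge0. Qed.

Lemma inner_sqr_sum_eq0 l : inner_sqr_sum l = 0 -> forall e, x l e = 0.
Proof.
move=> w0; apply: sqnorm_eq0; apply/eqP; rewrite -sqrf_eq0 eq_le sqr_ge0 andbT.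
rewrite -w0 /inner_sqr_sum (bigD1 l) //= lerDl; apply: sumr_ge0 => k _; apply: sqr_ge0.
Qed.

End DataGram.

Lemma sum_pair_pair {R : realType} {I A : finType} (F : (I * A) * (I * A) -> R) :
  \sum_p F p = \sum_(ij : I * I) \sum_(ab : A * A) F ((ij.1, ab.1), (ij.2, ab.2)).
Proof.
rewrite [LHS]sum_pair [LHS]sum_pair [RHS]sum_pair; apply: eq_bigr => i _ /=.
under eq_bigr do rewrite sum_pair.
by rewrite exchange_big; apply: eq_bigr => j _; rewrite sum_pair.
Qed.

Section DerivativeArrays.
Context {R : realType} {m d0 ND : nat} (x : 'I_ND -> 'I_d0 -> R).
Local Notation I := ('I_m * 'I_d0)%type.

Definition xdot (v : I -> R) l (j : 'I_m) : R := \sum_b x l b * v (j, b).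

Definition xxdot (X : I * I -> R) l (ij : 'I_m * 'I_m) : R :=
  \sum_a \sum_b x l a * x l b * X ((ij.1, a), (ij.2, b)).

Lemma sum_sqnorm_xxdot_div_le (X : I * I -> R) :
  \sum_l sqnorm (xxdot X l) / inner_sqr_sum x l <= sqnorm X.
Proof.
rewrite /sqnorm sum_pair_pair; under eq_bigr do rewrite mulr_suml.
rewrite exchange_big; apply: ler_sum => ij _.
(* frame bound for the rank-one arrays [x l (x) x l], whose Gram entries are [<x l, x k>^2] *)
set u := fun l (ab : 'I_d0 * 'I_d0) => x l ab.1 * x l ab.2.
set z := fun ab : 'I_d0 * 'I_d0 => X ((ij.1, ab.1), (ij.2, ab.2)).
have gramE l k : \sum_ab u l ab * u k ab = (\sum_e x l e * x k e) ^+ 2.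
  rewrite sum_pair expr2 mulr_suml; apply: eq_bigr => a _.
  by rewrite mulr_sumr; apply: eq_bigr => b _; rewrite /u; ring.
have termE l : xxdot X l ij ^+ 2 / inner_sqr_sum x l
    = (\sum_ab u l ab * z ab) ^+ 2 / \sum_k \sum_ab u l ab * u k ab.
  by under [X in _ = _ / X]eq_bigr do rewrite gramE; rewrite /xxdot sum_pair.
rewrite (eq_bigr _ (fun l _ => termE l)).
by apply: frame_bound => l k; rewrite gramE sqr_ge0.
Qed.

Lemma sum_weighted_sqnorm_xdot_le (Y : I -> R) :
  \sum_l inner_sqr_sum x l * sqnorm (xdot Y l)
  <= opnorm (gram x (inner_sqr_sum x)) * sqnorm Y.
Proof.
under eq_bigr do rewrite mulr_sumr.
rewrite exchange_big sqnorm_pair mulr_sumr; apply: ler_sum => k _.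
exact: (weighted_sqr_inner_le x _ (fun c => Y (k, c))).
Qed.

Variable P : 'I_ND -> 'I_m -> R.
Hypotheses (P_ge0 : forall l k, 0 <= P l k) (P_sum1 : forall l, \sum_k P l k = 1).

Definition hess_array (s : R) (ia jb : I) : R :=
  (ia == jb)%:R / s ^+ 2
  + \sum_l x l ia.2 * x l jb.2 * (P l jb.1 * ((jb.1 == ia.1)%:R - P l ia.1)).

Definition third_array (ia jb kc : I) : R :=
  \sum_l x l ia.2 * x l jb.2 * x l kc.2 * lse3 (P l) ia.1 jb.1 kc.1.

Lemma hess_array_matvec s (v : I -> R) :
  matvec (hess_array s) v = fun ia => v ia / s ^+ 2
    + \sum_l x l ia.2 * (P l ia.1 * (xdot v l ia.1 - \sum_j P l j * xdot v l j)).
Proof.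
apply: funext => ia; rewrite /matvec; under eq_bigr do rewrite mulrDl mulrAC.
rewrite big_split -mulr_suml /=; congr (_ / _ + _).
  by rewrite -[RHS](sum_delta v ia); apply: eq_bigr => jb _; rewrite eq_sym mulrC.
under eq_bigr do rewrite mulr_suml.
rewrite exchange_big; apply: eq_bigr => l _.
rewrite sum_pair; transitivity
    (\sum_j x l ia.2 * P l j * ((j == ia.1)%:R - P l ia.1) * xdot v l j).
  apply: eq_bigr => j _; rewrite /xdot mulr_sumr; apply: eq_bigr => b _; ring.
transitivity (\sum_j (j == ia.1)%:R * (x l ia.2 * (P l j * xdot v l j))
    - x l ia.2 * P l ia.1 * \sum_j P l j * xdot v l j).
  by rewrite mulr_sumr -sumrB; apply: eq_bigr => j _; ring.
by rewrite sum_delta; ring.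
Qed.

Lemma sqnorm_centered_xT_le (v : I -> R) :
  sqnorm (fun ia : I =>
    \sum_l x l ia.2 * (P l ia.1 * (xdot v l ia.1 - \sum_j P l j * xdot v l j)))
  <= opnorm (gram x (fun=> 1)) ^+ 2 * sqnorm v.
Proof.
set N := opnorm (gram x (fun=> 1)).
set beta := fun l i => P l i * (xdot v l i - \sum_j P l j * xdot v l j).
rewrite sqnorm_pair; apply: (@le_trans _ _ (\sum_i N * \sum_l beta l i ^+ 2)).
  by apply: ler_sum => i _; exact: (sqnorm_xT_le x (fun l => beta l i)).
rewrite -mulr_sumr exchange_big /= expr2 -mulrA ler_wpM2l ?opnorm_ge0 //.
apply: (@le_trans _ _ (\sum_l \sum_i xdot v l i ^+ 2)).
  by apply: ler_sum => l _; exact: (sqnorm_centered_le (P l) (P_ge0 l) (P_sum1 l)).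
rewrite exchange_big sqnorm_pair mulr_sumr; apply: ler_sum => i _.
exact: (sqr_inner_le x (fun b => v (i, b))).
Qed.

Lemma opnorm_hess_array_le s :
  0 < s -> opnorm (hess_array s) <= s ^- 2 + opnorm (gram x (fun=> 1)).
Proof.
move=> s_gt0; apply: opnorm_le => v v_le1; rewrite hess_array_matvec.
apply: Minkowski_le; apply: sqrtr_le.
- by rewrite invr_ge0 exprn_ge0 // ltW.
- have -> : sqnorm (fun ia => v ia / s ^+ 2) = (s ^- 2) ^+ 2 * sqnorm v.
    by rewrite -sqnormZ; congr sqnorm; apply: funext => ia; rewrite mulrC.
  by rewrite ler_piMr ?sqr_ge0.
- exact: opnorm_ge0.
- by apply: le_trans (sqnorm_centered_xT_le v) _; rewrite ler_piMr ?sqr_ge0.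
Qed.

Lemma third_array_contractE (X : I * I -> R) (Y : I -> R) :
  \sum_ia \sum_jb \sum_kc third_array ia jb kc * X (ia, jb) * Y kc
  = \sum_l \sum_ij xxdot X l ij * \sum_k lse3 (P l) ij.1 ij.2 k * xdot Y l k.
Proof.
set C := fun l (i j : 'I_m) => \sum_k lse3 (P l) i j k * xdot Y l k.
have contract_kc ia jb : \sum_kc third_array ia jb kc * X (ia, jb) * Y kc
    = \sum_l x l ia.2 * x l jb.2 * X (ia, jb) * C l ia.1 jb.1.
  under eq_bigr do rewrite !mulr_suml.
  rewrite exchange_big; apply: eq_bigr => l _.
  rewrite sum_pair /C /xdot mulr_sumr; apply: eq_bigr => k _.
  by rewrite !mulr_sumr; apply: eq_bigr => c _; ring.
under eq_bigr do under eq_bigr do rewrite contract_kc.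
under eq_bigr do rewrite exchange_big.
rewrite exchange_big; apply: eq_bigr => l _.
rewrite pair_bigA sum_pair_pair; apply: eq_bigr => ij _.
rewrite /xxdot sum_pair mulr_suml; apply: eq_bigr => a _.
by rewrite mulr_suml.
Qed.

Lemma tnorm123_third_array_le :
  tnorm123 third_array <= 6 * Num.sqrt (opnorm (gram x (inner_sqr_sum x))).
Proof.
apply: tnorm123_le => X Y X_le1 Y_le1; rewrite third_array_contractE.
set a := fun l => sqnorm (xxdot X l); set b := fun l => sqnorm (xdot Y l).
apply: le_trans (ler_norm _) _; apply: le_trans (ler_norm_sum _ _ _) _.
apply: (@le_trans _ _ (\sum_l 6 * (Num.sqrt (a l) * Num.sqrt (b l)))).
  by apply: ler_sum => l _; rewrite mulrA; exact: lse3_contract_le (P_ge0 l) (P_sum1 l) _ _.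
rewrite -mulr_sumr ler_pM2l //.
have a0 l : inner_sqr_sum x l = 0 -> a l = 0.
  move=> w0; rewrite /a /sqnorm big1 // => ij _.
  rewrite /xxdot big1 ?expr0n // => a' _; rewrite big1 // => b' _.
  by rewrite (inner_sqr_sum_eq0 x _ w0) !mul0r.
apply: le_trans (CauchySchwarz_weighted a b (inner_sqr_sum x) (fun l => sqnorm_ge0 _)
  (fun l => sqnorm_ge0 _) (inner_sqr_sum_ge0 x) a0) _.
rewrite -[X in _ <= X]mul1r; apply: ler_pM; rewrite ?sqrtr_ge0 //.
  by apply: sqrtr_le => //; rewrite expr1n; apply: le_trans (sum_sqnorm_xxdot_div_le X) X_le1.
rewrite ler_sqrt ?opnorm_ge0 //; apply: le_trans (sum_weighted_sqnorm_xdot_le Y) _.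
by rewrite ler_piMr ?opnorm_ge0.
Qed.

End DerivativeArrays.

(** * Derivatives of the potential *)

Section DirectionalDerivative.
Context {R : realType} {V : normedModType R}.
Implicit Types (f g : V -> R) (a v : V).
Local Open Scope classical_set_scope.

Lemma derive_along {W : normedModType R} (F : V -> W) a v :
  'D_v F a = 'D_1 (fun h : R => F (h *: v + a)) 0.
Proof.
rewrite /derive; set g1 := fun h => h^-1 *: _; set g2 := fun h => h^-1 *: _.
suff -> : g1 = g2 by [].
by apply: funext => h; rewrite /g1 /g2 /= scale0r add0r [_%:A]mulr1 addr0.
Qed.

Lemma is_derive_comp {f} {g : R -> R} {a v df dg} :
  is_derive a v f df -> is_derive (f a) 1 g dg -> is_derive a v (g \o f) (dg * df).
Proof.
move=> [f_der <-] [g_der <-].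
set phi := fun h : R => f (h *: v + a).
have phi0 : phi 0 = f a by rewrite /phi scale0r add0r.
have phi_der : derivable phi 0 1 by exact: (derivable1P f a v).1 f_der.
have gphi_der : derivable g (phi 0) 1 by rewrite phi0.
have gphi_diff : differentiable (g \o phi) 0.
  by apply: differentiable_comp; apply/derivable1_diffP.
split; first by apply/derivable1P; apply/derivable1_diffP.
rewrite derive_along (derive_along f) -!derive1E.
by rewrite (derive1_comp phi_der gphi_der) phi0 derive1E.
Qed.

Lemma is_derive_quadratic {f a v} c d :
  (forall h : R, f (h *: v + a) = f a + h * c + h ^+ 2 * d) -> is_derive a v f c.
Proof.
move=> f_quad.
have lim_c : (fun h : R => h^-1 *: ((f \o shift a) (h *: v) - f a)) @ 0^' --> c.
  apply: (@cvg_trans _ ((fun h : R => c + h * d) @ 0^')).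
    apply: near_eq_cvg; near=> h.
    have h_neq0 : h != 0 by near: h; exact: nbhs_dnbhs_neq.
    by rewrite /= f_quad -[_ *: _]/(h^-1 * _); field.
  have : (fun h : R => c + h * d) @ 0 --> c + 0 * d.
    by apply: cvgD; [exact: cvg_cst | apply: cvgMl; exact: cvg_id].
  by rewrite mul0r addr0 => /cvg_within_filter; apply.
by split; [apply: cvgP lim_c | apply: cvg_lim lim_c].
Unshelve. all: by end_near.
Qed.

Lemma is_deriveMr {f g a v df dg} : is_derive a v f df -> is_derive a v g dg ->
  is_derive a v (fun p => f p * g p) (df * g a + f a * dg).
Proof.
move=> f_der g_der; apply: is_derive_eq (is_deriveM f_der g_der) _.
by rewrite /GRing.scale /= addrC mulrC.
Qed.

Lemma is_derive_sumr {n} {h : 'I_n -> V -> R} {a v} {dh : 'I_n -> R} :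
  (forall i, is_derive a v (h i) (dh i)) ->
  is_derive a v (fun p => \sum_(i < n) h i p) (\sum_(i < n) dh i).
Proof. by move=> h_der; have := is_derive_sum h_der; rewrite fct_sumE. Qed.

Lemma is_deriveVr {f a v df} : f a != 0 -> is_derive a v f df ->
  is_derive a v (fun p => (f p)^-1) (- (f a) ^- 2 * df).
Proof. by move=> fa_neq0 [f_der <-]; split; [exact: derivableV | exact: deriveV]. Qed.

Lemma is_derive_expR_comp {f a v df} : is_derive a v f df ->
  is_derive a v (fun p => expR (f p)) (expR (f a) * df).
Proof. by move=> f_der; exact: is_derive_comp f_der (is_derive_expR _). Qed.

Lemma is_derive_ln_comp {f a v df} : 0 < f a -> is_derive a v f df ->
  is_derive a v (fun p => ln (f p)) ((f a)^-1 * df).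
Proof. by move=> fa_gt0 f_der; exact: is_derive_comp f_der (is_derive1_ln fa_gt0). Qed.

End DirectionalDerivative.

Section Softmax.
Context {R : realType} {m d0 : nat} (xj : 'I_d0 -> R).
Local Notation V := 'M[R]_(m, d0).
Implicit Types (q u v : V) (k : 'I_m).

Lemma ip_lineD q v h k : ip xj (h *: v + q) k = ip xj q k + h * ip xj v k.
Proof. by rewrite /ip mulr_sumr -big_split; apply: eq_bigr => a _; rewrite !mxE /=; ring. Qed.

Lemma is_derive_ip q v k : is_derive q v (fun p => ip xj p k) (ip xj v k).
Proof. by apply: (is_derive_quadratic _ 0) => h; rewrite ip_lineD; ring. Qed.

Definition normalizer q : R := \sum_k expR (ip xj q k).

Lemma is_derive_normalizer q v :
  is_derive q v normalizer (\sum_k expR (ip xj q k) * ip xj v k).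
Proof. exact: is_derive_sumr (fun k => is_derive_expR_comp (is_derive_ip q v k)). Qed.

Definition lik_mean q v : R := \sum_k lik xj k q * ip xj v k.

Hypothesis m_gt0 : (0 < m)%N.

Lemma normalizer_gt0 q : 0 < normalizer q.
Proof.
rewrite /normalizer (bigD1 (Ordinal m_gt0)) //= ltr_pwDl ?expR_gt0 //.
by apply: sumr_ge0 => k _; rewrite ltW ?expR_gt0.
Qed.

Lemma lik_ge0 k q : 0 <= lik xj k q.
Proof. by rewrite divr_ge0 ?ltW ?expR_gt0 ?normalizer_gt0. Qed.

Lemma sum_lik q : \sum_k lik xj k q = 1.
Proof. by rewrite -mulr_suml divff // gt_eqF ?normalizer_gt0. Qed.

Lemma ln_lik k q : ln (lik xj k q) = ip xj q k - ln (normalizer q).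
Proof.
by rewrite lnM ?posrE ?expR_gt0 ?invr_gt0 ?normalizer_gt0 // lnV ?posrE ?normalizer_gt0 // expRK.
Qed.

Lemma is_derive_ln_normalizer q v :
  is_derive q v (fun p => ln (normalizer p)) (lik_mean q v).
Proof.
apply: is_derive_eq (is_derive_ln_comp (normalizer_gt0 q) (is_derive_normalizer q v)) _.
by rewrite /lik_mean mulr_sumr; apply: eq_bigr => k _; rewrite mulrA [_^-1 * _]mulrC.
Qed.

Lemma is_derive_lik k q u :
  is_derive q u (lik xj k) (lik xj k q * (ip xj u k - lik_mean q u)).
Proof.
have Z_neq0 : normalizer q != 0 by rewrite gt_eqF ?normalizer_gt0.
apply: is_derive_eq (is_deriveMr (is_derive_expR_comp (is_derive_ip q u k))
  (is_deriveVr Z_neq0 (is_derive_normalizer q u))) _.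
have mean_eq : lik_mean q u = (\sum_i expR (ip xj q i) * ip xj u i) / normalizer q.
  by rewrite /lik_mean mulr_suml; apply: eq_bigr => i _; rewrite mulrAC.
by rewrite mean_eq /lik -/(normalizer q); field.
Qed.

Lemma is_derive_lik_mean q u v : is_derive q u (fun p => lik_mean p v)
  (\sum_k lik xj k q * (ip xj u k - lik_mean q u) * ip xj v k).
Proof.
apply: is_derive_sumr => k.
apply: is_derive_eq (is_deriveMr (is_derive_lik k q u) (is_derive_cst (ip xj v k) q u)) _.
by rewrite mulr0 addr0.
Qed.

End Softmax.

Section Potential.
Context {R : realType} {m d0 ND : nat} (x : 'I_ND -> 'I_d0 -> R) (y : 'I_ND -> 'I_m).
Context (sigma0 c : R).
Local Notation V := 'M[R]_(m, d0).
Implicit Types (q u v w : V).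

Definition frob v w : R := \sum_i \sum_a v i a * w i a.

Lemma frob_lineD q v w h : frob (h *: v + q) w = frob q w + h * frob v w.
Proof.
rewrite /frob mulr_sumr -big_split; apply: eq_bigr => i _.
by rewrite mulr_sumr -big_split; apply: eq_bigr => a _; rewrite !mxE /=; ring.
Qed.

Definition gradU q w : R :=
  frob q w / sigma0 ^+ 2 - \sum_l (ip (x l) w (y l) - lik_mean (x l) q w).

Definition hessU q v w : R := frob v w / sigma0 ^+ 2
  + \sum_l \sum_k lik (x l) k q * (ip (x l) v k - lik_mean (x l) q v) * ip (x l) w k.

Definition thirdU q u v w : R := \sum_l \sum_k
  (lik (x l) k q * (ip (x l) u k - lik_mean (x l) q u) * (ip (x l) v k - lik_mean (x l) q v)
   - lik (x l) k q * \sum_i lik (x l) i q * (ip (x l) u i - lik_mean (x l) q u) * ip (x l) v i)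
  * ip (x l) w k.

Hypothesis sigma0_neq0 : sigma0 != 0.

Lemma is_derive_gauss q w :
  is_derive q w (fun p : V => (\sum_i \sum_a p i a ^+ 2) / (2 * sigma0 ^+ 2))
    (frob q w / sigma0 ^+ 2).
Proof.
apply: (is_derive_quadratic _ ((\sum_i \sum_a w i a ^+ 2) / (2 * sigma0 ^+ 2))) => h.
have sqr_line i : \sum_a (h *: w + q) i a ^+ 2 = \sum_a q i a ^+ 2
    + (2 * h) * \sum_a q i a * w i a + h ^+ 2 * \sum_a w i a ^+ 2.
  by rewrite !mulr_sumr -!big_split; apply: eq_bigr => a _; rewrite !mxE /=; ring.
rewrite (eq_bigr _ (fun i _ => sqr_line i)) !big_split -!mulr_sumr /= /frob.
by field.
Qed.

Hypothesis m_gt0 : (0 < m)%N.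

Lemma is_derive_Upot q w : is_derive q w (Upot x y sigma0 c) (gradU q w).
Proof.
have -> : Upot x y sigma0 c = fun p => (\sum_i \sum_a p i a ^+ 2) / (2 * sigma0 ^+ 2) + c
    - \sum_l (ip (x l) p (y l) - ln (normalizer (x l) p)).
  apply: funext => p; rewrite /Upot; congr (_ - _).
  by apply: eq_bigr => l _; rewrite ln_lik.
apply: is_derive_eq (is_deriveB (is_deriveD (is_derive_gauss q w) (is_derive_cst c q w))
  (is_derive_sumr (fun l => is_deriveB (is_derive_ip (x l) q w (y l))
    (is_derive_ln_normalizer (x l) m_gt0 q w)))) _.
by rewrite addr0.
Qed.

Lemma derive_Upot w : (fun p => 'D_w (Upot x y sigma0 c) p) = fun p => gradU p w.
Proof. by apply: funext => p; have [_ ->] := is_derive_Upot p w. Qed.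

Lemma is_derive_gradU q v w : is_derive q v (fun p => gradU p w) (hessU q v w).
Proof.
have frob_der : is_derive q v (fun p => frob p w / sigma0 ^+ 2) (frob v w / sigma0 ^+ 2).
  by apply: (is_derive_quadratic _ 0) => h; rewrite frob_lineD; ring.
apply: is_derive_eq (is_deriveB frob_der (is_derive_sumr (fun l =>
  is_deriveB (is_derive_cst (ip (x l) w (y l)) q v)
    (is_derive_lik_mean (x l) m_gt0 q v w)))) _.
by rewrite /hessU -sumrN; congr (_ + _); apply: eq_bigr => l _; rewrite sub0r opprK.
Qed.

Lemma derive_gradU v w : (fun p => 'D_v (fun r => gradU r w) p) = fun p => hessU p v w.
Proof. by apply: funext => p; have [_ ->] := is_derive_gradU p v w. Qed.

Lemma is_derive_hessU q u v w : is_derive q u (fun p => hessU p v w) (thirdU q u v w).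
Proof.
apply: is_derive_eq (is_deriveD (is_derive_cst (frob v w / sigma0 ^+ 2) q u)
  (is_derive_sumr (fun l => is_derive_sumr (fun k =>
    is_deriveMr (is_deriveMr (is_derive_lik (x l) m_gt0 k q u)
      (is_deriveB (is_derive_cst (ip (x l) v k) q u) (is_derive_lik_mean (x l) m_gt0 q u v)))
    (is_derive_cst (ip (x l) w k) q u))))) _.
rewrite add0r; apply: eq_bigr => l _; apply: eq_bigr => k _.
by rewrite !fctE; ring.
Qed.

End Potential.

Section Coordinates.
Context {R : realType} {m d0 : nat}.
Local Notation e := (ebasis R).

Lemma ip_ebasis (xj : 'I_d0 -> R) (ia : 'I_m * 'I_d0) k :
  ip xj (e ia) k = (k == ia.1)%:R * xj ia.2.
Proof.
rewrite /ip -(sum_delta xj ia.2) mulr_sumr; apply: eq_bigr => b _.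
by rewrite mxE -mulnb natrM; ring.
Qed.

Lemma sum_ip_ebasis (xj : 'I_d0 -> R) (f : 'I_m -> R) ia :
  \sum_k f k * ip xj (e ia) k = f ia.1 * xj ia.2.
Proof. by under eq_bigr do rewrite ip_ebasis mulrCA; rewrite sum_delta. Qed.

Lemma frob_ebasis (ia jb : 'I_m * 'I_d0) : frob (e ia) (e jb) = (ia == jb)%:R.
Proof.
case: ia jb => [i a] [j b]; rewrite -(sum_delta (fun p => (p == (j, b))%:R) (i, a)).
rewrite sum_pair; apply: eq_bigr => i' _; apply: eq_bigr => a' _.
by rewrite !mxE !xpair_eqE -!mulnb !natrM.
Qed.

End Coordinates.

Section PotentialDerivatives.
Context {R : realType} {m d0 ND : nat} (x : 'I_ND -> 'I_d0 -> R) (y : 'I_ND -> 'I_m).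
Context (sigma0 c : R).
Hypotheses (m_gt0 : (0 < m)%N) (sigma0_neq0 : sigma0 != 0).
Local Notation e := (ebasis R).

Lemma hess_Upot (q : 'M[R]_(m, d0)) :
  hess (Upot x y sigma0 c) q = hess_array x (fun l k => lik (x l) k q) sigma0.
Proof.
apply: funext => ia; apply: funext => jb.
rewrite /hess derive_Upot //.
have [_ ->] := is_derive_gradU x y sigma0 m_gt0 q (e ia) (e jb).
rewrite /hessU /hess_array frob_ebasis; congr (_ + _); apply: eq_bigr => l _.
rewrite sum_ip_ebasis !ip_ebasis /lik_mean sum_ip_ebasis; ring.
Qed.

Lemma third_Upot (q : 'M[R]_(m, d0)) :
  third (Upot x y sigma0 c) q = third_array x (fun l k => lik (x l) k q).
Proof.
apply: funext => ia; apply: funext => jb; apply: funext => kc.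
rewrite /third derive_Upot // derive_gradU //.
have [_ ->] := is_derive_hessU x sigma0 m_gt0 q (e ia) (e jb) (e kc).
rewrite /thirdU /third_array; apply: eq_bigr => l _.
rewrite !sum_ip_ebasis !ip_ebasis /lik_mean !sum_ip_ebasis /lse3; ring.
Qed.

End PotentialDerivatives.

Theorem lemma15 (R : realType) (m d0 ND : nat)
  (hm : (0 < m)%N) (hd0 : (0 < d0)%N) (hND : (0 < ND)%N)
  (x : 'I_ND -> 'I_d0 -> R) (y : 'I_ND -> 'I_m) (sigma0 c : R)
  (hsigma : 0 < sigma0) :
  (forall q : 'M[R]_(m, d0),
     opnorm (hess (Upot x y sigma0 c) q)
     <= sigma0 ^- 2 + opnorm (fun a b : 'I_d0 => \sum_(l < ND) x l a * x l b))
  /\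
  (forall q : 'M[R]_(m, d0),
     tnorm123 (third (Upot x y sigma0 c) q)
     <= 6 * Num.sqrt (opnorm (fun a b : 'I_d0 =>
              \sum_(l < ND) x l a * x l b *
                (\sum_(k < ND) (\sum_(e < d0) x l e * x k e) ^+ 2)))).
Proof.
have sigma0_neq0 : sigma0 != 0 by rewrite gt_eqF.
split => q.
  rewrite hess_Upot // -gram1.
  by apply: opnorm_hess_array_le => // [l k|l]; [apply: lik_ge0 | apply: sum_lik].
rewrite third_Upot //.
by apply: tnorm123_third_array_le => [l k|l]; [apply: lik_ge0 | apply: sum_lik].
Qed.
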